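(* Let $q=p^m$ with $p$ prime, let $3\le k\le n\le q$, let $\alpha=(\alpha_1,\dots,\alpha_n)\in\mathbb{F}_q^n$ have pairwise distinct entries, let $v=(v_1,\dots,v_n)\in(\mathbb{F}_q^* )^n$, $\eta\in\mathbb{F}_q^*$ and $\delta\in\mathbb{F}_q$. Let $\mathcal{C}$ and $\mathcal{C}_1$ be the codes defined in the context. Define $\mathbf{t}=(t_1,\dots,t_{n+2})\in\mathbb{F}_q^{n+2}$ by $t_i=v_i^{-1}u_i\alpha_i^{\,n+2-k}$ for $1\le i\le n$, where $u_i=\prod_{j\ne i}(\alpha_i-\alpha_j)^{-1}$; $t_{n+1}=\delta-S_2-\eta S_5$; and $t_{n+2}=S_1$, where, with all $\sigma_r=\sigma_r([n])$, $S_1=\sigma_1$, $S_2=\sigma_1^2-\sigma_2$, and $S_5=-(\sigma_3\sigma_1^2+\sigma_5-\sigma_3\sigma_2-\sigma_4\sigma_1)+\sigma_2(\sigma_1^3+\sigma_3-2\sigma_2\sigma_1)+\sigma_1(\sigma_2\sigma_1^2+\sigma_4-\sigma_2^2-\sigma_3\sigma_1)-\sigma_1^2(\sigma_1^3+\sigma_3-2\sigma_2\sigma_1)$. Then $\mathcal{C}=\overline{\mathcal{C}_1}(\mathbf{t})$, i.e. $\mathcal{C}=\{(c_1,\dots,c_{n+2},\sum_{i=1}^{n+2}t_ic_i):(c_1,\dots,c_{n+2})\in\mathcal{C}_1\}$.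
   Context: For a finite set $I\subseteq[n]=\{1,\dots,n\}$ and $r\ge1$, $\sigma_r(I)=(-1)^r\sum_{i_1<\dots<i_r\in I}\alpha_{i_1}\cdots\alpha_{i_r}$ (with $\sigma_r(I)=0$ if $r>|I|$). Let $\mathcal{S}=\{f(x)=\sum_{i=0}^{k-1}f_ix^i+\eta f_{k-1}x^{k+2}: f_i\in\mathbb{F}_q\}$. The code $\mathcal{C}\subseteq\mathbb{F}_q^{n+3}$ is $\mathcal{C}=\{(v_1f(\alpha_1),\dots,v_nf(\alpha_n),f_{k-1},f_{k-2},f_{k-3}+\delta f_{k-1}): f\in\mathcal{S}\}$, where $f_j$ is the coefficient of $x^j$ in $f$ for $j\le k-1$. The code $\mathcal{C}_1\subseteq\mathbb{F}_q^{n+2}$ is obtained from $\mathcal{C}$ by deleting the last coordinate, i.e. $\mathcal{C}_1=\{(v_1f(\alpha_1),\dots,v_nf(\alpha_n),f_{k-1},f_{k-2}):f\in\mathcal{S}\}$. *)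

From HB Require Import structures.
From mathcomp Require Import all_boot all_order all_algebra all_field.
Set Implicit Arguments. Unset Strict Implicit. Unset Printing Implicit Defensive.
Import Order.TTheory GRing.Theory.
Local Open Scope ring_scope.

Section Codes.
Variables (F : fieldType) (n k : nat) (alpha v : 'I_n -> F) (eta delta : F).

Definition sigma (r : nat) (I : {set 'I_n}) : F :=
  (-1) ^+ r * \sum_(J : {set 'I_n} | (J \subset I) && (#|J| == r)) \prod_(i in J) alpha i.

Definition fS (f : {poly F}) : {poly F} :=
  f + (eta * f`_(k.-1))%:P * 'X^(k + 2).

Definition evalpart (f : {poly F}) : 'rV[F]_n := \row_(i < n) (v i * (fS f).[alpha i]).

Definition encC (f : {poly F}) : 'rV[F]_(n + 2 + 1) :=
  row_mx (row_mx (evalpart f) (\row_(j < 2) nth 0 [:: f`_(k.-1); f`_(k-2)] j))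
         (\row_(j < 1) (f`_(k-3) + delta * f`_(k.-1))).

Definition encC1 (f : {poly F}) : 'rV[F]_(n + 2) :=
  row_mx (evalpart f) (\row_(j < 2) nth 0 [:: f`_(k.-1); f`_(k-2)] j).

Definition inC (c : 'rV[F]_(n + 2 + 1)) : Prop :=
  exists f : {poly F}, (size f <= k)%N /\ c = encC f.

Definition inC1 (c : 'rV[F]_(n + 2)) : Prop :=
  exists f : {poly F}, (size f <= k)%N /\ c = encC1 f.

Definition extend (t c : 'rV[F]_(n + 2)) : 'rV[F]_(n + 2 + 1) :=
  row_mx c (\row_(j < 1) \sum_(i < n + 2) t 0 i * c 0 i).

Definition u (i : 'I_n) : F := \prod_(j < n | j != i) (alpha i - alpha j)^-1.

Definition sg (r : nat) : F := sigma r setT.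
Definition S1 : F := sg 1.
Definition S2 : F := sg 1 ^+ 2 - sg 2.
Definition S5 : F :=
  - (sg 3 * sg 1 ^+ 2 + sg 5 - sg 3 * sg 2 - sg 4 * sg 1)
  + sg 2 * (sg 1 ^+ 3 + sg 3 - 2%:R * sg 2 * sg 1)
  + sg 1 * (sg 2 * sg 1 ^+ 2 + sg 4 - sg 2 ^+ 2 - sg 3 * sg 1)
  - sg 1 ^+ 2 * (sg 1 ^+ 3 + sg 3 - 2%:R * sg 2 * sg 1).

Definition tvec : 'rV[F]_(n + 2) :=
  row_mx (\row_(i < n) ((v i)^-1 * u i * alpha i ^+ (n + 2 - k)))
         (\row_(j < 2) nth 0 [:: delta - S2 - eta * S5; S1] j).

End Codes.

(** The weights [u i] are those of Lagrange interpolation at the [alpha i]: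
    comparing coefficients of [x^(n-1)] in the interpolation of [x^j] gives
    [sum_i u_i alpha_i^j = (j == n-1)] for [j < n].  Every [alpha i] is a root of
    [prod_l (x - alpha_l) = sum_r sigma_r x^(n-r)], so the higher sums
    [h_s = sum_i u_i alpha_i^(n-1+s)] satisfy [sum_r sigma_r h_(s-r) = 0], whence
    [h_1 = - S1], [h_2 = S2] and [h_5 = S5].  Hence the first [n] weights of [t]
    send a codeword of [C1] to [f_(k-3) - S1 f_(k-2) + (S2 + eta S5) f_(k-1)], and
    the last two weights correct this to [f_(k-3) + delta f_(k-1)]. *)

From HB Require Import structures.
From mathcomp Require Import all_boot all_order all_algebra all_field.
From mathcomp Require Import zify ring.
Import GRing.Theory.
Local Open Scope ring_scope.
Set Implicit Arguments. Unset Strict Implicit.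

Section WeightedPowerSums.
Variables (F : fieldType) (n : nat) (alpha : 'I_n -> F).

Definition lagrange_num (i : 'I_n) : {poly F} := \prod_(j < n | j != i) ('X - (alpha j)%:P).

Lemma horner_lagrange_num i m :
  (lagrange_num i).[alpha m] = if i == m then (u alpha i)^-1 else 0.
Proof.
rewrite horner_prod; case: eqP => [<-|/eqP neq_im].
  by rewrite /u prodfV invrK; apply: eq_bigr => j _; rewrite hornerXsubC.
by rewrite (bigD1 m) 1?eq_sym //= hornerXsubC subrr mul0r.
Qed.

Lemma size_lagrange_num i : size (lagrange_num i) = n.
Proof.
rewrite size_prod /=; last by move=> j _; rewrite polyXsubC_eq0.
rewrite (eq_bigr (fun=> (2 * 1)%N)); last by move=> j _; rewrite size_XsubC.
rewrite -big_distrr /= sum1_card cardC1 card_ord.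
by case: n i => [[]|n' _] //; rewrite mul2n -addnn -addSn addnK.
Qed.

Lemma coef_lagrange_num i : (lagrange_num i)`_n.-1 = 1.
Proof.
have := monic_prod_XsubC (index_enum 'I_n) (fun j => j != i) alpha.
by rewrite -/(lagrange_num i) monicE lead_coefE size_lagrange_num => /eqP.
Qed.

Definition wpow_sum (j : nat) : F := \sum_(i < n) u alpha i * alpha i ^+ j.

Lemma prod_subr_sg (x : F) :
  \prod_(l < n) (x - alpha l) = \sum_(r < n.+1) sg alpha r * x ^+ (n - r).
Proof.
under eq_bigr do rewrite addrC.
rewrite bigA_distr (partition_big (fun J : {set 'I_n} => inord #|J| : 'I_n.+1) xpredT) //=.
apply: eq_bigr => r _; rewrite /sg /sigma -mulrA mulr_suml mulr_sumr.
symmetry; apply: eq_big => [J|J /andP[_ /eqP card_J]].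
  rewrite subsetT /= -val_eqE /= inordK // ltnS.
  by have := max_card (mem J); rewrite card_ord.
rewrite [RHS](bigID (mem J)) /=.
rewrite [X in _ = X * _](eq_bigr (fun l => - alpha l)) => [|l lJ]; last exact: ifT.
rewrite [X in _ = _ * X](eq_bigr (fun=> x)) => [|l /negPf]; last exact: ifF.
rewrite prodrN prodr_const mulrA -card_J; congr (_ * _ ^+ _).
rewrite -[X in (X - _)%N](card_ord n) -(cardsC J) addKn.
by apply: eq_card => l; rewrite in_setC.
Qed.

Lemma sg0 : sg alpha 0 = 1.
Proof.
rewrite /sg /sigma expr0 mul1r (big_pred1 set0) ?big_set0 // => J.
by rewrite subsetT /= cards_eq0.
Qed.

Lemma sg_eq0 r : (n < r)%N -> sg alpha r = 0.
Proof.
move=> lt_nr; rewrite /sg /sigma big_pred0 ?mulr0 // => J.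
rewrite subsetT /=; apply/negP => /eqP card_J.
by have := max_card (mem J); rewrite card_ord -/#|J| card_J leqNgt lt_nr.
Qed.

Hypothesis alpha_inj : injective alpha.

Lemma u_neq0 i : u alpha i != 0.
Proof.
rewrite /u prodfV invr_eq0; apply/prodf_neq0 => j neq_ji.
by rewrite subr_eq0 (inj_eq alpha_inj) eq_sym.
Qed.

Lemma lagrange_interp (p : {poly F}) : (size p <= n)%N ->
  p = \sum_(i < n) (p.[alpha i] * u alpha i) *: lagrange_num i.
Proof.
move=> size_p; apply/eqP; rewrite -subr_eq0; apply/negPn/negP => nz_diff.
have := max_poly_roots nz_diff (rs := [seq alpha i | i <- enum 'I_n]).
rewrite map_inj_uniq // enum_uniq size_map size_enum_ord.
have -> : all (root (p - \sum_(i < n) (p.[alpha i] * u alpha i) *: lagrange_num i))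
              [seq alpha i | i <- enum 'I_n].
  apply/allP => x /mapP [m _ ->]; rewrite /root hornerD hornerN horner_sum.
  rewrite (bigD1 m) //= big1 ?addr0 => [|i /negPf neq_im]; last first.
    by rewrite hornerZ horner_lagrange_num neq_im mulr0.
  by rewrite hornerZ horner_lagrange_num eqxx mulfK ?u_neq0 // subrr.
move=> /(_ isT isT); apply/negP; rewrite -leqNgt.
apply: (leq_trans (size_polyD _ _)); rewrite geq_max size_p size_polyN.
apply: (leq_trans (size_sum _ _ _)); apply/bigmax_leqP => i _.
by rewrite (leq_trans (size_scale_leq _ _)) // size_lagrange_num.
Qed.

Lemma wpow_sum_small j : (j < n)%N -> wpow_sum j = (j == n.-1)%:R.
Proof.
move=> lt_jn; have := @lagrange_interp 'X^j.
rewrite size_polyXn => /(_ lt_jn)/(congr1 (coefp n.-1)).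
rewrite /= coefXn coef_sum eq_sym => ->.
by apply: eq_bigr => i _; rewrite coefZ coef_lagrange_num hornerXn mulr1 mulrC.
Qed.

Lemma wpow_sum_rec_full t :
  \sum_(r < n.+1) sg alpha r * wpow_sum (t + (n - r)) = 0.
Proof.
under eq_bigr do rewrite mulr_sumr.
rewrite exchange_big /= big1 // => i _.
have : \prod_(l < n) (alpha i - alpha l) = 0 by rewrite (bigD1 i) //= subrr mul0r.
rewrite prod_subr_sg => root_i.
transitivity (u alpha i * alpha i ^+ t * \sum_(r < n.+1) sg alpha r * alpha i ^+ (n - r)).
  by rewrite mulr_sumr; apply: eq_bigr => r _; rewrite exprD; ring.
by rewrite root_i mulr0.
Qed.

Lemma wpow_sum_rec t : (0 < n)%N ->
  \sum_(r < t.+2) sg alpha r * wpow_sum (n.-1 + (t.+1 - r)) = 0.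
Proof.
move=> n_gt0; pose G r := sg alpha r * wpow_sum (n + t - r).
transitivity (\sum_(r < t.+2) G r).
  by apply: eq_bigr => r _; rewrite /G; congr (_ * wpow_sum _); have := ltn_ord r; lia.
transitivity (\sum_(r < n.+1) G r); last first.
  rewrite -[RHS](wpow_sum_rec_full t); apply: eq_bigr => r _.
  by rewrite /G; congr (_ * wpow_sum _); have := ltn_ord r; lia.
rewrite (big_ord_widen (n + t.+2) G) ?[RHS](big_ord_widen (n + t.+2) G) //; try lia.
rewrite [LHS]big_mkcond [RHS]big_mkcond; apply: eq_bigr => r _.
case: (ltnP r t.+2) => r_small; case: (ltnP r n.+1) => r_le_n //=.
  by rewrite /G sg_eq0 ?mul0r.
rewrite /G wpow_sum_small; last lia.
by rewrite (_ : (_ == _) = false) ?mulr0 //; apply/negbTE; lia.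
Qed.

Lemma wpow_sum_values : (0 < n)%N ->
  [/\ wpow_sum n.-1 = 1, wpow_sum n = - S1 alpha,
       wpow_sum n.+1 = S2 alpha & wpow_sum (n + 4) = S5 alpha].
Proof.
move=> n_gt0; pose p s := wpow_sum (n.-1 + s).
have -> : wpow_sum n.-1 = p 0 by rewrite /p addn0.
have -> : wpow_sum n = p 1 by rewrite /p; congr wpow_sum; lia.
have -> : wpow_sum n.+1 = p 2 by rewrite /p; congr wpow_sum; lia.
have -> : wpow_sum (n + 4) = p 5 by rewrite /p; congr wpow_sum; lia.
have p0E : p 0 = 1 by rewrite /p addn0 wpow_sum_small ?eqxx //; lia.
have rec t := wpow_sum_rec t n_gt0.
move: (rec 0) (rec 1) (rec 2) (rec 3) (rec 4).
rewrite !big_ord_recr !big_ord0 /= sg0 -!/(p _) p0E /S1 /S2 /S5.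
move: (p 1) (p 2) (p 3) (p 4) (p 5) (sg alpha 1) (sg alpha 2) (sg alpha 3) (sg alpha 4) (sg alpha 5).
move=> p1 p2 p3 p4 p5 s1 s2 s3 s4 s5 rec0 rec1 rec2 rec3 rec4.
have p1E : p1 = - s1 by apply: subr0_eq; rewrite -[RHS]rec0; ring.
have p2E : p2 = - (s1 * p1 + s2) by apply: subr0_eq; rewrite -[RHS]rec1; ring.
have p3E : p3 = - (s1 * p2 + s2 * p1 + s3) by apply: subr0_eq; rewrite -[RHS]rec2; ring.
have p4E : p4 = - (s1 * p3 + s2 * p2 + s3 * p1 + s4).
  by apply: subr0_eq; rewrite -[RHS]rec3; ring.
have p5E : p5 = - (s1 * p4 + s2 * p3 + s3 * p2 + s4 * p1 + s5).
  by apply: subr0_eq; rewrite -[RHS]rec4; ring.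
by split; rewrite ?p5E ?p4E ?p3E ?p2E ?p1E //; ring.
Qed.

End WeightedPowerSums.

Section ExtendedCode.
Variables (F : fieldType) (n k : nat) (alpha v : 'I_n -> F) (eta delta : F).
Hypotheses (alpha_inj : injective alpha) (v_neq0 : forall i, v i != 0).
Hypotheses (k_ge3 : (3 <= k)%N) (k_le_n : (k <= n)%N).

Lemma horner_fS (f : {poly F}) x : (size f <= k)%N ->
  (fS k eta f).[x] = \sum_(j < k) f`_j * x ^+ j + eta * f`_k.-1 * x ^+ (k + 2).
Proof. by move=> size_f; rewrite /fS hornerD (horner_coef_wide _ size_f) hornerCM hornerXn. Qed.

Lemma sum_tvec_evalpart (f : {poly F}) : (size f <= k)%N ->
  \sum_(i < n) (v i)^-1 * u alpha i * alpha i ^+ (n + 2 - k) * (v i * (fS k eta f).[alpha i])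
  = \sum_(j < k) f`_j * wpow_sum alpha (n + 2 - k + j)
    + eta * f`_k.-1 * wpow_sum alpha (n + 4).
Proof.
move=> size_f; rewrite /wpow_sum; under [in RHS]eq_bigr do rewrite mulr_sumr.
rewrite [in RHS]exchange_big mulr_sumr -big_split /=; apply: eq_bigr => i _.
rewrite (_ : (n + 4 = n + 2 - k + (k + 2))%N); last lia.
under [in RHS]eq_bigr do rewrite exprD.
rewrite exprD horner_fS //; move: (alpha i ^+ (n + 2 - k)) => a.
rewrite [_ * (v i * _)]mulrCA -!mulrA mulVKf ?v_neq0 // !mulrDr !mulr_sumr.
by congr (_ + _); [apply: eq_bigr => j _|]; ring.
Qed.

Lemma sum_wpow_sum_window (c : nat -> F) :
  \sum_(j < k) c j * wpow_sum alpha (n + 2 - k + j)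
  = c (k - 3)%N - c (k - 2)%N * S1 alpha + c k.-1 * S2 alpha.
Proof.
have [k' def_k] : exists k', k = k'.+3 by exists (k - 3)%N; lia.
have n_gt0 : (0 < n)%N by lia.
have [w_top w_n w_nS _] := wpow_sum_values alpha_inj n_gt0.
rewrite def_k !big_ord_recr /= big1 => [|j _]; last first.
  rewrite (wpow_sum_small alpha_inj); last by have := ltn_ord j; lia.
  by rewrite (_ : (_ == _) = false) ?mulr0 //; apply/negbTE; have := ltn_ord j; lia.
rewrite (_ : (n + 2 - k'.+3 + k')%N = n.-1); last lia.
rewrite (_ : (n + 2 - k'.+3 + k'.+1)%N = n); last lia.
rewrite (_ : (n + 2 - k'.+3 + k'.+2)%N = n.+1); last lia.
rewrite w_top w_n w_nS !subSS !subn0 /=; ring.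
Qed.

Lemma sum_tvec_encC1 (f : {poly F}) : (size f <= k)%N ->
  \sum_(i < n + 2) tvec k alpha v eta delta 0 i * encC1 k alpha v eta f 0 i
  = f`_(k - 3) + delta * f`_k.-1.
Proof.
move=> size_f; have n_gt0 : (0 < n)%N by lia.
have [_ _ _ w_n4] := wpow_sum_values alpha_inj n_gt0.
rewrite big_split_ord /= !big_ord_recr !big_ord0 /= /tvec /encC1.
under eq_bigr do rewrite !row_mxEl !mxE.
rewrite !row_mxEr !mxE /= sum_tvec_evalpart // sum_wpow_sum_window w_n4 /S1; ring.
Qed.

Lemma encC_extend (f : {poly F}) : (size f <= k)%N ->
  encC k alpha v eta delta f = extend (tvec k alpha v eta delta) (encC1 k alpha v eta f).
Proof.
move=> size_f; rewrite /encC /extend -/(encC1 _ _ _ _ f); congr row_mx.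
by apply/rowP => j; rewrite !mxE sum_tvec_encC1.
Qed.

End ExtendedCode.

Unset Implicit Arguments.

Theorem theorem1 (F : finFieldType) (p m : nat) (hp : prime p)
  (hq : #|F| = (p ^ m)%N) (n k : nat) (hk3 : (3 <= k)%N) (hkn : (k <= n)%N)
  (hnq : (n <= #|F|)%N) (alpha v : 'I_n -> F) (halpha : injective alpha)
  (hv : forall i, v i != 0) (eta delta : F) (heta : eta != 0) :
  forall c : 'rV[F]_(n + 2 + 1),
    inC k alpha v eta delta c <->
    exists c1 : 'rV[F]_(n + 2), inC1 k alpha v eta c1 /\
      c = extend (tvec k alpha v eta delta) c1.
Proof.
have extendE := encC_extend eta delta halpha hv hk3 hkn.
move=> c; split.
  by move=> [f [size_f ->]]; exists (encC1 k alpha v eta f); split; [exists f | exact: extendE].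
by move=> [_ [[f [size_f ->]] ->]]; exists f; rewrite extendE.
Qed.
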